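(* Let $m,n$ be natural numbers. If the $n$-th term $G(n,m)$ of the Goodstein sequence $G(m)$ is $0$, then $n=2n_1$ for some natural number $n_1$, and the hereditary representation of $G(n_1-1,m)$ in base $n_1$ is $1\cdot n_1^{1}+0\cdot n_1^{0}$.
   Context: For a natural number base $b>1$, the hereditary representation $m\langle b\rangle$ of $m$ is $\sum_{i=0}^{l} a_i b^{i}$ with $0\le a_i<b$, $a_l\ne0$, each exponent itself written in hereditary representation in base $b$, recursively. $m\langle b\rangle''$ is obtained by syntactically replacing every $b$ by $b+1$ in $m\langle b\rangle$. The Goodstein sequence $G(m)=\{m, m''-1, (m''-1)''-1,\dots\}$ starts from $m$ in base $2$; its $n$-th term is $G(n,m)$, with $G(1,m)=m$ in base $2$, $G(k,m)$ written in base $k+1$, and $G(k+1,m)=G(k,m)\langle k+1\rangle''-1$. *)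

From mathcomp Require Import all_boot.
Set Implicit Arguments. Unset Strict Implicit. Unset Printing Implicit Defensive.

(* A hereditary representation  sum_{i=0}^{l} a_i b^{e_i}  is a (little-endian)
   list of pairs (hereditary representation of the exponent e_i, digit a_i).
   The base b itself is left symbolic: evaluating at base c is the
   "syntactic replacement of b by c". *)
Inductive htm : Type := HNode of seq (htm * nat).

Fixpoint digits_aux (fuel b m : nat) : seq nat :=
  match fuel with
  | 0 => [::]
  | f.+1 => if m == 0 then [::] else (m %% b) :: digits_aux f b (m %/ b)
  end.
Definition digits (b m : nat) : seq nat := digits_aux m b m.

Fixpoint hrep_aux (fuel b m : nat) : htm :=
  match fuel with
  | 0 => HNode [::]
  | f.+1 =>
      let ds := digits b m in
      HNode [seq (hrep_aux f b p.1, p.2) | p <- zip (iota 0 (size ds)) ds]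
  end.
(* m<b> : hereditary representation of m in base b (meaningful for b > 1) *)
Definition hrep (b m : nat) : htm := hrep_aux m.+1 b m.

Fixpoint heval (c : nat) (t : htm) : nat :=
  let: HNode l := t in
  (fix go (l : seq (htm * nat)) : nat :=
     match l with
     | [::] => 0
     | (e, a) :: l' => a * c ^ heval c e + go l'
     end) l.

(* gaux m j = G(j+1, m) *)
Fixpoint gaux (m j : nat) : nat :=
  match j with
  | 0 => m
  | j'.+1 => heval j'.+3 (hrep j'.+2 (gaux m j')) - 1
  end.
(* G(n,m): G(1,m) = m, G(k+1,m) = G(k,m)<k+1>'' - 1 (defined for n >= 1) *)
Definition goodstein (n m : nat) : nat := gaux m n.-1.

(* the hereditary representation  1 * b^1 + 0 * b^0  (exponents 0 = empty sum,
   1 = 1 * b^0) *)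
Definition hrep_b1 : htm :=
  HNode [:: (HNode [::], 0); (HNode [:: (HNode [::], 1)], 1)].
Example ex3 : [seq goodstein k 3 | k <- iota 1 6] = [:: 3; 3; 3; 2; 1; 0].
Proof. by vm_compute. Qed.
Example ex3r : hrep 3 (goodstein 2 3) = hrep_b1.
Proof. by vm_compute. Qed.
Example ex4 : [seq goodstein k 4 | k <- iota 1 4] = [:: 4; 26; 41; 60].
Proof. by vm_compute. Qed.

From mathcomp Require Import all_boot zify.

(* Substituting a larger base c for b in the hereditary representation of x
   never decreases its value: by induction on the exponents, each digit term
   d * b ^ j becomes d * c ^ j' with j <= j'.  The value strictly increases
   when x >= b, since x then has a nonzero digit at a positive power, and a
   single digit x < b is left unchanged.  Hence G(k) does not decrease as long
   as it is at least its base k + 1, and when it first drops below the base,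
   at step n1, the subtraction of 1 must have undone the bump entirely:
   G(n1 - 1) = G(n1) = n1, so G(n1 - 1) is 1 * n1^1 in base n1.  From then on
   every bump is trivial, G loses 1 per step and first vanishes at 2 n1. *)

Fixpoint dsum (c : nat) (e : nat -> nat) (s : nat) (ds : seq nat) : nat :=
  if ds is d :: ds' then d * c ^ e s + dsum c e s.+1 ds' else 0.

Lemma heval_HNode_zip c (t : nat -> htm) s ds :
  heval c (HNode [seq (t p.1, p.2) | p <- zip (iota s (size ds)) ds])
  = dsum c (fun i => heval c (t i)) s ds.
Proof. by elim: ds s => [|d ds IH] s //=; rewrite -IH. Qed.

Lemma heval_hrep_aux c f b x :
  heval c (hrep_aux f.+1 b x)
  = dsum c (fun i => heval c (hrep_aux f b i)) 0 (digits b x).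
Proof. by rewrite /= -heval_HNode_zip. Qed.

Lemma size_digits_aux g b m : 1 < b -> size (digits_aux g b m) <= m.
Proof.
move=> b_gt1; elim: g m => [|g IH] m //=.
case: eqP => [//|/eqP m_neq0] /=.
have: m %/ b < m by rewrite ltn_Pdiv // lt0n.
by have := IH (m %/ b); lia.
Qed.

Lemma dsum_digits_aux g b m s : 1 < b -> m <= g ->
  dsum b id s (digits_aux g b m) = m * b ^ s.
Proof.
move=> b_gt1; elim: g m s => [|g IH] m s; first by rewrite leqn0 => /eqP ->.
move=> le_mg /=; case: eqP => [->|/eqP m_neq0] //=.
have lt_mb_m : m %/ b < m by rewrite ltn_Pdiv // lt0n.
rewrite IH; last by lia.
by rewrite {3}(divn_eq m b) expnS mulnA mulnDl addnC.
Qed.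

Lemma leq_dsum b c e f s ds :
  (forall j, s <= j < s + size ds -> b ^ e j <= c ^ f j) ->
  dsum b e s ds <= dsum c f s ds.
Proof.
elim: ds s => [|d ds IH] s //= le_exp.
apply: leq_add; first by apply: leq_mul => //; apply: le_exp; lia.
by apply: IH => j range_j; apply: le_exp; lia.
Qed.

Lemma ltn_dsum b c e f s ds :
  (forall j, s <= j < s + size ds -> b ^ e j < c ^ f j) ->
  0 < dsum b e s ds -> dsum b e s ds < dsum c f s ds.
Proof.
elim: ds s => [|d ds IH] s //= lt_exp.
have le_tail : dsum b e s.+1 ds <= dsum c f s.+1 ds.
  by apply: leq_dsum => j range_j; apply/ltnW/lt_exp; lia.
have lt_head : b ^ e s < c ^ f s by apply: lt_exp; lia.
case: (posnP d) => [->|d_gt0] /=.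
  by rewrite !mul0n !add0n; apply: IH => j range_j; apply: lt_exp; lia.
by move=> _; rewrite -addSn leq_add // ltn_pmul2l.
Qed.

Lemma leq_pexp2 b c i j : 0 < b -> b <= c -> i <= j -> b ^ i <= c ^ j.
Proof.
move=> b_gt0 le_bc le_ij.
apply: (@leq_trans (c ^ i)); last by apply: leq_pexp2l; lia.
by case: i le_ij => [|i] _; rewrite ?expn0 ?leq_exp2r.
Qed.

Lemma ltn_pexp2 b c i j : 0 < b -> b < c -> 0 < i -> i <= j -> b ^ i < c ^ j.
Proof.
move=> b_gt0 lt_bc i_gt0 le_ij.
apply: (@leq_trans (c ^ i)); first by rewrite ltn_exp2r.
by apply: leq_pexp2l; lia.
Qed.

Lemma leq_heval_hrep_aux b c f x : 1 < b -> b <= c -> x < f ->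
  x <= heval c (hrep_aux f b x).
Proof.
move=> b_gt1 le_bc; elim: f x => [//|f IH] x lt_x_f.
rewrite heval_hrep_aux; apply: (@leq_trans (dsum b id 0 (digits b x))).
  by rewrite dsum_digits_aux ?muln1.
apply: leq_dsum => j /andP [_]; rewrite /digits => lt_j_size.
apply: leq_pexp2; try lia.
by apply: IH; have := size_digits_aux x b x b_gt1; lia.
Qed.

Lemma ltn_heval_hrep b c x : 1 < b -> b < c -> b <= x ->
  x < heval c (hrep b x).
Proof.
move=> b_gt1 lt_bc le_bx; case: x le_bx => [|x] le_bx; first by lia.
rewrite /hrep heval_hrep_aux /digits /=.
set q := x.+1 %/ b.
have lt_q_x : q < x.+1 by rewrite ltn_Pdiv.
have q_gt0 : 0 < q by rewrite divn_gt0 //; lia.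
have sum_q : dsum b id 1 (digits_aux x b q) = q * b.
  by rewrite dsum_digits_aux ?expn1 //; lia.
rewrite {1}(divn_eq x.+1 b) -/q addnC -sum_q expn0 muln1 -addnS leq_add //.
apply: ltn_dsum => [j /andP [j_gt0 lt_j_size]|]; last by rewrite sum_q muln_gt0; lia.
have size_q := size_digits_aux x b q b_gt1.
apply: ltn_pexp2 => //; first by lia.
by apply: (@leq_heval_hrep_aux b c x.+1); lia.
Qed.

Lemma heval_hrep_small b c x : x < b -> heval c (hrep b x) = x.
Proof.
case: x => [//|x] lt_xb.
rewrite /hrep /= /digits /= modn_small // divn_small //.
by case: x lt_xb => [|x] _ /=; rewrite expn0 muln1 addn0.
Qed.

Lemma hrep_diag b : 1 < b -> hrep b b = hrep_b1.
Proof.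
case: b => [|[|b]] // _.
rewrite /hrep /digits /= modnn divnn /= modn_small // divn_small //=.
by case: b.
Qed.

Section GoodsteinTail.

Variable m : nat.
Hypothesis m_gt1 : 1 < m.

Lemma gauxS j : gaux m j.+1 = heval j.+3 (hrep j.+2 (gaux m j)) - 1.
Proof. by []. Qed.

Lemma gaux_below_base j t : gaux m j < j.+2 -> gaux m (j + t) = gaux m j - t.
Proof.
move=> lt_base; elim: t => [|t IH]; first by rewrite addn0 subn0.
rewrite addnS gauxS IH heval_hrep_small; first by lia.
by apply: leq_ltn_trans (leq_subr _ _) _; lia.
Qed.

Lemma gaux_above_base j : j.+2 <= gaux m j -> gaux m j <= gaux m j.+1.
Proof.
move=> le_base; rewrite gauxS.
by have := @ltn_heval_hrep j.+2 j.+3 _ isT (ltnSn _) le_base; lia.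
Qed.

Lemma gaux_zeros j0 : gaux m j0 = 0 ->
  exists i, gaux m i = i.+2 /\ forall j, (gaux m j == 0) = (i.+1 + i.+2 <= j).
Proof.
move=> gaux_j0.
have ex_below : exists j, gaux m j < j.+2 by exists j0; rewrite gaux_j0.
case: (ex_minnP ex_below) => -[|i] lt_base min_i; first by move: lt_base => /=; lia.
have above j : j <= i -> j.+2 <= gaux m j.
  by move=> le_ji; rewrite leqNgt; apply/negP => /min_i; lia.
have le_next := gaux_above_base _ (above i (leqnn i)).
have gaux_i : gaux m i = i.+2 by have := above i (leqnn i); lia.
exists i; split => // j; case: (leqP j i) => [le_ji|lt_ij].
  by have := above j le_ji; lia.
by rewrite -(subnKC lt_ij) gaux_below_base //; lia.
Qed.

End GoodsteinTail.

Theorem lemma6 (m n : nat) :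
  1 < m -> 0 < n ->
  goodstein n m = 0 ->
  (forall k, 0 < k < n -> goodstein k m <> 0) ->
  exists n1 : nat,
    [/\ n = 2 * n1, 1 < n1 & hrep n1 (goodstein n1.-1 m) = hrep_b1].
Proof.
move=> m_gt1 n_gt0 zero_n first_zero.
have [i [gaux_i gaux_eq0]] := @gaux_zeros m m_gt1 _ zero_n.
have le_zero : i.+1 + i.+2 <= n.-1 by rewrite -gaux_eq0; apply/eqP.
have ge_zero : n.-1 <= i.+1 + i.+2.
  rewrite leqNgt; apply/negP => lt_n.
  apply: (first_zero (i.+1 + i.+2).+1); first by lia.
  by apply/eqP; rewrite /goodstein succnK gaux_eq0.
exists i.+2; split => //; first by lia.
by rewrite /goodstein /= gaux_i hrep_diag.
Qed.
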